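(* Let $n\ge1$ and let $\epsilon_{ij}\in\{0,1\}$ be given for all $1\le i,j\le n$ with $|i-j|\le 1$. Let $w$ be the number of pairs $(u,v)\in\{0,1\}^n\times\{0,1\}^n$ such that $\epsilon_{ij}=\delta_{u_i,v_j}$ for all $1\le i,j\le n$ with $|i-j|\le1$ (where $\delta$ is the Kronecker delta). If \[ \epsilon_{i-1,i-1}+\epsilon_{i,i-1}+\epsilon_{i-1,i}+\epsilon_{i,i}\in\{0,2,4\}\quad\text{for all } i\in\{2,\dots,n\}, \] then $w=2$; otherwise $w=0$.
   Context: In the paper, such a family $(\epsilon_{ij})$ is called a ''string realizable configuration of weight $w$'', with $w$ as defined in the claim, for the alphabet $\Sigma=\{0,1\}$ (the case $k=2$, $r=1$). *)

From mathcomp Require Import all_boot.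
Set Implicit Arguments. Unset Strict Implicit. Unset Printing Implicit Defensive.

(* Indices 1..n are represented 0-based by 'I_n. Words in {0,1}^n are
   {ffun 'I_n -> bool} (false = 0, true = 1). A configuration eps assigns
   a bit to every pair (i,j); only pairs with |i-j| <= 1 matter. *)

Definition adj n (i j : 'I_n) : bool := (i <= j.+1) && (j <= i.+1).

Definition realizes n (eps : 'I_n -> 'I_n -> bool)
  (u v : {ffun 'I_n -> bool}) : bool :=
  [forall i, forall j, adj i j ==> (eps i j == (u i == v j))].

Definition weight n (eps : 'I_n -> 'I_n -> bool) : nat :=
  #|[set p : {ffun 'I_n -> bool} * {ffun 'I_n -> bool} | realizes eps p.1 p.2]|.

(* local parity condition at (1-based) position i in {2..n}, i.e.
   0-based k = i-1 in {1..n-1}, with previous index k-1 *)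
Definition local_ok n (eps : 'I_n -> 'I_n -> bool) : Prop :=
  forall (k : nat) (Hk : k < n) (Hk' : k.-1 < n), 0 < k ->
    let a := Ordinal Hk' in let b := Ordinal Hk in
    (nat_of_bool (eps a a) + eps b a + eps a b + eps b b) \in [:: 0; 2; 4].

(* Reading the equations eps_ij = [u_i = v_j] along the band |i - j| <= 1 in
   the order (1,1), (2,1), (2,2), (3,2), ... determines v_1, u_2, v_2, u_3, ...
   from u_1, so there are at most two realizing pairs.  The remaining
   equations eps_(i-1,i) hold for these candidates exactly when the parity
   condition holds at i, because for any bits the four values [a = b],
   [a' = b], [a = b'], [a' = b'] have an even sum; the same fact shows that
   the parity condition is necessary. *)

From mathcomp Require Import all_boot.
From mathcomp Require Import zify.

Set Implicit Arguments.
Unset Strict Implicit.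
Unset Printing Implicit Defensive.

Lemma parity_square_eqb (a a' b b' c : bool) :
  (nat_of_bool (a == b) + (a' == b) + c + (a' == b')) \in [:: 0; 2; 4]
  = (c == (a == b')).
Proof. by case: a a' b b' c => [] [] [] [] []. Qed.

Lemma eqb_solve (x y z : bool) : z = (x == y) -> y = (x == z).
Proof. by move=> ->; case: x y => [] []. Qed.

Lemma realizes_adj n (eps : 'I_n -> 'I_n -> bool) u v (i j : 'I_n) :
  realizes eps u v -> adj i j -> eps i j = (u i == v j).
Proof. by move=> /forallP/(_ i)/forallP/(_ j)/implyP H /H/eqP. Qed.

Lemma realizes_local_ok n (eps : 'I_n -> 'I_n -> bool) u v :
  realizes eps u v -> local_ok eps.
Proof.
move=> Huv k Hk Hk' k_gt0 /=.
rewrite !(realizes_adj Huv) ?parity_square_eqb // /adj /=.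
all: by apply/andP; split; lia.
Qed.

Lemma weight_not_local_ok n (eps : 'I_n -> 'I_n -> bool) :
  ~ local_ok eps -> weight eps = 0.
Proof.
move=> not_ok; apply/eqP; rewrite cards_eq0; apply/eqP/setP => -[u v].
by rewrite !inE; apply/negP => /realizes_local_ok.
Qed.

Section Realizers.

Variable m : nat.
Variable eps : 'I_m.+1 -> 'I_m.+1 -> bool.
Local Notation e i j := (eps (inord i) (inord j)).

Lemma realizesP (u v : {ffun 'I_m.+1 -> bool}) :
  reflect (forall i j, i <= m -> j <= m -> i <= j.+1 -> j <= i.+1 ->
             e i j = (u (inord i) == v (inord j)))
          (realizes eps u v).
Proof.
apply: (iffP idP) => [Huv i j le_im le_jm le_ij le_ji | H].
  by rewrite (realizes_adj Huv) // /adj !inordK ?ltnS ?le_ij.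
apply/forallP => i; apply/forallP => j; apply/implyP => /andP[le_ij le_ji].
by apply/eqP; rewrite -[i]inord_val -[j]inord_val H // -ltnS.
Qed.

Local Lemma local_ok_nat : local_ok eps -> forall i, i < m ->
  (nat_of_bool (e i i) + e i.+1 i + e i i.+1 + e i.+1 i.+1) \in [:: 0; 2; 4].
Proof.
move=> ok i lt_im; have lt_i1m : i.+1 < m.+1 by []; have lt_i_m1 := ltnW lt_i1m.
have := ok i.+1 lt_i1m lt_i_m1 isT => /=.
have -> : Ordinal lt_i1m = inord i.+1 by apply: val_inj; rewrite /= inordK.
by have -> : Ordinal lt_i_m1 = inord i by apply: val_inj; rewrite /= inordK.
Qed.

(* The diagonal equation forces v_i from u_i, the subdiagonal one u_(i+1)
   from v_i; b is the value of u_0. *)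
Fixpoint uword (b : bool) (i : nat) : bool :=
  if i is i'.+1 then (uword b i' == e i' i') == e i'.+1 i' else b.

Definition vword (b : bool) (i : nat) : bool := uword b i == e i i.

Definition realizer (b : bool) :=
  ([ffun i : 'I_m.+1 => uword b i], [ffun i : 'I_m.+1 => vword b i]).

Lemma realizer_diag b i : e i i = (uword b i == vword b i).
Proof. by rewrite /vword; case: (uword b i) (e i i) => [] []. Qed.

Lemma realizer_subdiag b i : e i.+1 i = (uword b i.+1 == vword b i).
Proof. by rewrite /= -/(vword b i); case: (vword b i) (e i.+1 i) => [] []. Qed.

Lemma realizer_superdiag b i : local_ok eps -> i < m ->
  e i i.+1 = (uword b i == vword b i.+1).
Proof.
move=> ok lt_im; apply/eqP; have := local_ok_nat ok lt_im.
by rewrite (realizer_diag b i) (realizer_diag b i.+1) (realizer_subdiag b i)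
  parity_square_eqb.
Qed.

Lemma realizer_realizes b : local_ok eps ->
  realizes eps (realizer b).1 (realizer b).2.
Proof.
move=> ok; apply/realizesP => i j le_im le_jm le_ij le_ji.
rewrite !ffunE !inordK ?ltnS //.
have [E|[E|E]] : j = i \/ j = i.+1 \/ i = j.+1 by lia.
all: subst.
- exact: realizer_diag.
- exact: realizer_superdiag ok le_jm.
- exact: realizer_subdiag.
Qed.

Lemma realizes_realizer_eq
    (p : {ffun 'I_m.+1 -> bool} * {ffun 'I_m.+1 -> bool}) :
  realizes eps p.1 p.2 -> p = realizer (p.1 ord0).
Proof.
case: p => u v /realizesP /= Huv.
have uv_eq i : i <= m ->
    u (inord i) = uword (u ord0) i /\ v (inord i) = vword (u ord0) i.
  have v_eq j : j <= m ->
      u (inord j) = uword (u ord0) j -> v (inord j) = vword (u ord0) j.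
    by move=> le_jm u_eq; rewrite /vword -u_eq; apply/eqb_solve/Huv.
  elim: i => [|i IH] le_im.
    have u_eq : u (inord 0) = uword (u ord0) 0.
      by congr (u _); apply: val_inj; rewrite /= inordK.
    by split; last exact: v_eq.
  have [_ v_eq_i] := IH (ltnW le_im).
  suff u_eq : u (inord i.+1) = uword (u ord0) i.+1 by split; last exact: v_eq.
  rewrite /= -/(vword _ i) -v_eq_i.
  by apply: eqb_solve; rewrite eq_sym; apply: Huv => //; lia.
congr pair; apply/ffunP => i; have [u_eq v_eq] := uv_eq i (ltn_ord i).
  by rewrite ffunE -u_eq inord_val.
by rewrite ffunE -v_eq inord_val.
Qed.

Lemma realizer_neq : realizer true != realizer false.
Proof. by apply/eqP => -[/ffunP/(_ ord0)]; rewrite !ffunE. Qed.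

Lemma weight_local_ok : local_ok eps -> weight eps = 2.
Proof.
move=> ok; rewrite /weight.
rewrite (_ : [set p | _] = [set realizer true; realizer false]).
  by rewrite cards2 realizer_neq.
apply/setP => p; rewrite !inE; apply/idP/orP.
  move=> /realizes_realizer_eq.
  by case: (p.1 ord0) => ->; [left | right].
by case=> /eqP ->; apply: realizer_realizes.
Qed.

End Realizers.

Theorem mainTheorem2 (n : nat) (eps : 'I_n -> 'I_n -> bool) :
  0 < n ->
  (local_ok eps -> weight eps = 2) /\ (~ local_ok eps -> weight eps = 0).
Proof.
case: n eps => [//|m] eps _.
by split; [apply: weight_local_ok | apply: weight_not_local_ok].
Qed.
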